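(* (a) There exists an identity-labeled full-graph Subgraph MPNN (i.e. a choice of $T$, $M_t$, $U_t$) such that for every graph $G=(V,E)$ and all $i,j\in V$, $h^{(T)}_{i,j}$ equals the number of $2$-paths from $i$ to $j$. (b) There exists an identity-labeled full-graph Subgraph MPNN such that for every graph $G$ and all $i,j\in V$, $h^{(T)}_{i,j}$ equals the number of $3$-paths from $i$ to $j$.
   Context: Graphs are finite, simple, undirected, $G=(V,E)$; $N(v)$ is the neighbour set of $v$. For $L\ge1$, an $L$-path from $i$ to $j$ is a sequence of nodes $i=v_1,v_2,\dots,v_{L+1}=j$, pairwise distinct, with $(v_s,v_{s+1})\in E$ for all $s$ (so there are none when $i=j$). Identity-labeled full-graph Subgraph MPNN: specified by $T$ and arbitrary functions $M_t$ (values in some $\mathbb R^{d_t}$), $U_t$. For each root $i\in V$ and each $j\in V$: $h^{(0)}_{i,j}=\mathbb 1_{i=j}$ (concatenated with the node attribute $x_j$ if attributes are present), and $h^{(t+1)}_{i,j}=U_t\big(h^{(t)}_{i,j},\sum_{k\in N(j)}M_t(h^{(t)}_{i,j},h^{(t)}_{i,k},e_{j,k})\big)$. *)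

From HB Require Import structures.
From mathcomp Require Import all_boot all_order all_algebra.
From mathcomp Require Import reals.
Set Implicit Arguments. Unset Strict Implicit. Unset Printing Implicit Defensive.
Import GRing.Theory Num.Theory.
Local Open Scope ring_scope.

Definition simple_graph (V : finType) (e : rel V) : Prop :=
  symmetric e /\ irreflexive e.

(* L-paths from i to j: sequences v_1 = i, ..., v_{L+1} = j, pairwise
   distinct, consecutive vertices adjacent. Represented as (L+1)-tuples. *)
Definition Lpaths (V : finType) (e : rel V) (L : nat) (i j : V)
  : {set (L.+1).-tuple V} :=
  [set p : (L.+1).-tuple V |
     [&& thead p == i, last (thead p) (behead p) == j,
         uniq p & path e (thead p) (behead p)]].

Definition num_Lpaths (V : finType) (e : rel V) (L : nat) (i j : V) : nat :=
  #|Lpaths e L i j|.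

(* Identity-labeled full-graph Subgraph MPNN (no node / edge attributes).
   hdim t = d_t for the hidden state h^{(t+1)}; the state h^{(0)} is the
   one-dimensional indicator 1_{i=j}. mdim t = dimension of the messages M_t. *)
Definition sdim (hdim : nat -> nat) (t : nat) : nat :=
  if t is t'.+1 then hdim t' else 1%N.

Record mpnn (R : realType) := MPNN {
  depth : nat;
  hdim : nat -> nat;
  mdim : nat -> nat;
  msg : forall t : nat,
          'rV[R]_(sdim hdim t) -> 'rV[R]_(sdim hdim t) -> 'rV[R]_(mdim t);
  upd : forall t : nat,
          'rV[R]_(sdim hdim t) -> 'rV[R]_(mdim t) -> 'rV[R]_(sdim hdim t.+1)
}.

(* h^{(t)}_{i,j} for root i and node j. *)
Fixpoint mpnn_state (R : realType) (N : mpnn R) (V : finType) (e : rel V)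
    (t : nat) (i j : V) {struct t} : 'rV[R]_(sdim (hdim N) t) :=
  match t as t0 return 'rV[R]_(sdim (hdim N) t0) with
  | 0 => \row_(_ < 1) (i == j)%:R
  | t'.+1 =>
      @upd R N t' (mpnn_state N e t' i j)
        (\sum_(k | e j k) @msg R N t' (mpnn_state N e t' i j) (mpnn_state N e t' i k))
  end.

Definition counts_Lpaths (R : realType) (N : mpnn R) (L : nat) : Prop :=
  sdim (hdim N) (depth N) = 1%N /\
  forall (V : finType) (e : rel V), simple_graph e ->
  forall (i j : V) (x : 'I_(sdim (hdim N) (depth N))),
    mpnn_state N e (depth N) i j 0 x = (num_Lpaths e L i j)%:R.

From HB Require Import structures.
From mathcomp Require Import all_boot all_order all_algebra.
From mathcomp Require Import reals.
Set Implicit Arguments. Unset Strict Implicit. Unset Printing Implicit Defensive.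
Import GRing.Theory.
Local Open Scope ring_scope.

(* Let A be the adjacency matrix.  Aggregating the root indicator 1_{i=k} over
   the neighbours k of j gives the state (1_{i=j}, A_ji); aggregating A_li over
   the neighbours l of j then gives (A^2)_ij, the number of common neighbours
   of i and j, which for i <> j is the number of 2-paths from i to j.  A 3-path
   i a b j is a neighbour b <> i of j together with a common neighbour a <> j of
   i and b; since j is such a common neighbour exactly when A_ij = 1, there are
   (A^2)_ib - A_ij choices of a.  So after storing (A^2)_bi in the state, one
   more layer sums (1 - 1_{i=b}) ((A^2)_bi - A_ij) over the neighbours b of j.
   In both readouts the factor 1 - 1_{i=j} removes the diagonal, where there
   are no paths. *)

Lemma card_injective_cover (I T : finType) (f : I -> T) (A : {set T}) :
  injective f -> A \subset codom f -> #|A| = (\sum_(x : I) (f x \in A))%N.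
Proof.
move=> inj_f sub_A.
have im_A : A = f @: [set x | f x \in A].
  apply/setP => y; apply/idP/imsetP => [yA | [x]]; last by rewrite inE => + ->.
  by have /codomP [x fx] := subsetP sub_A y yA; exists x; rewrite ?inE -?fx.
rewrite {1}im_A card_imset // -sum1_card big_mkcond.
by apply: eq_bigr => x _; rewrite inE.
Qed.

Section PathCounting.
Variables (V : finType) (e : rel V).

Lemma num_Lpaths_diag L i : num_Lpaths e L.+1 i i = 0%N.
Proof.
apply/eqP; rewrite cards_eq0; apply/eqP/setP => -[[|a [|b s]] //= hs].
rewrite !inE /thead (tnth_nth a) /=; apply/negP.
case/and4P => [/eqP a_i /eqP last_i /andP [a_notin _] _].
by rewrite a_i -last_i mem_last in a_notin.
Qed.

Lemma num_2paths_sum i j :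
  num_Lpaths e 2 i j = (\sum_a (uniq [:: i; a; j] && path e i [:: a; j]))%N.
Proof.
rewrite /num_Lpaths (@card_injective_cover _ _ (fun a => [tuple i; a; j])).
- by apply: eq_bigr => a _; rewrite inE /thead (tnth_nth i) /= !eqxx.
- by move=> a b /(congr1 val) [].
apply/subsetP => -[[|a [|b [|c [|]]]] //= hs].
rewrite inE /thead (tnth_nth a) /= => /and4P [/eqP <- /eqP <- _ _].
by apply/codomP; exists b; apply: val_inj.
Qed.

Lemma num_3paths_sum i j :
  num_Lpaths e 3 i j =
  (\sum_a \sum_b (uniq [:: i; a; b; j] && path e i [:: a; b; j]))%N.
Proof.
rewrite /num_Lpaths pair_big /=.
rewrite (@card_injective_cover _ _ (fun x : V * V => [tuple i; x.1; x.2; j])).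
- by apply: eq_bigr => -[a b] _; rewrite inE /thead (tnth_nth i) /= !eqxx.
- by move=> [a b] [a' b'] /(congr1 val) [-> ->].
apply/subsetP => -[[|a [|b [|c [|d [|]]]]] //= hs].
rewrite inE /thead (tnth_nth a) /= => /and4P [/eqP <- /eqP <- _ _].
by apply/codomP; exists (b, c); apply: val_inj.
Qed.

Section SimpleGraphPaths.
Hypotheses (e_sym : symmetric e) (e_irr : irreflexive e).

Lemma neq_of_edge x y : e x y -> x != y.
Proof. by apply: contraTneq => ->; rewrite e_irr. Qed.

Lemma uniq_2pathE i a j : i != j ->
  uniq [:: i; a; j] && path e i [:: a; j] = e i a && e a j.
Proof.
move=> ij; rewrite /= !inE !negb_or ij !andbT.
case: (boolP (e i a)) => [ia | _]; last by rewrite !andbF.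
case: (boolP (e a j)) => [aj | _]; last by rewrite !andbF.
by rewrite (neq_of_edge ia) (neq_of_edge aj).
Qed.

Lemma uniq_3pathE i a b j : i != j ->
  uniq [:: i; a; b; j] && path e i [:: a; b; j] =
  [&& e i a, e a b, e b j, a != j & b != i].
Proof.
move=> ij; rewrite /= !inE !negb_or ij !andbT.
case: (boolP (e i a)) => [ia | _]; last by rewrite !andbF.
case: (boolP (e a b)) => [ab | _]; last by rewrite !andbF.
case: (boolP (e b j)) => [bj | _]; last by rewrite !andbF.
rewrite (neq_of_edge ia) (neq_of_edge ab) (neq_of_edge bj) /=.
by rewrite (eq_sym b i) !andbT andbC.
Qed.

Lemma num_2paths i j : i != j -> num_Lpaths e 2 i j = (\sum_(a | e j a) e a i)%N.
Proof.
move=> ij; rewrite num_2paths_sum [in RHS]big_mkcond; apply: eq_bigr => a _.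
by rewrite uniq_2pathE // (e_sym i a) (e_sym j a); case: (e a i); case: (e a j).
Qed.

Lemma num_3paths i j : i != j ->
  num_Lpaths e 3 i j =
  (\sum_(b | e j b && (b != i)) \sum_(a | a != j) (e i a && e a b))%N.
Proof.
move=> ij; rewrite num_3paths_sum exchange_big [in RHS]big_mkcond.
apply: eq_bigr => b _.
under eq_bigr => a _ do rewrite uniq_3pathE // (e_sym b j).
have [/andP [jb bi] | not_jb] := boolP (e j b && (b != i)).
  rewrite [in RHS]big_mkcond; apply: eq_bigr => a _; rewrite jb bi !andbT.
  by case: (a != j); rewrite ?andbT ?andbF.
rewrite big1 // => a _; apply/eqP; rewrite eqb0; apply: contra not_jb.
by case/and5P => _ _ -> _ ->.
Qed.

Lemma sum_nbrs_adj_split i j b : e j b ->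
  (\sum_(a | e b a) e a i)%N = (e j i + \sum_(a | a != j) (e i a && e a b))%N.
Proof.
move=> jb; rewrite big_mkcond (bigD1 j) //= (e_sym b j) jb; congr addn.
apply: eq_bigr => a _; rewrite (e_sym i a) (e_sym b a).
by case: (e a b); rewrite ?andbT ?andbF.
Qed.
End SimpleGraphPaths.
End PathCounting.

Section RowCoordinates.
Variable R : nmodType.

Definition rcoord n (v : 'rV[R]_n) (k : nat) : R :=
  oapp (fun x : 'I_n => v 0 x) 0 (insub k).

Lemma rcoord_row n (f : nat -> R) k :
  (k < n)%N -> rcoord (\row_(x < n) f x) k = f k.
Proof. by move=> lt_kn; rewrite /rcoord insubT /= mxE. Qed.

Lemma rcoord_scalar (v : 'rV[R]_1) (x : 'I_1) : v 0 x = rcoord v 0.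
Proof. by rewrite /rcoord insubT /= (ord1 x); congr (v _ _); apply/eqP. Qed.
End RowCoordinates.

Section CoordinateMPNN.
Variable R : realType.

Definition coord_mpnn (T : nat) (h : nat -> nat)
    (msgf : nat -> (nat -> R) -> (nat -> R) -> R)
    (updf : nat -> (nat -> R) -> R -> nat -> R) : mpnn R :=
  @MPNN R T h (fun _ => 1%N)
    (fun t a b => \row_(_ < 1) msgf t (rcoord a) (rcoord b))
    (fun t a m => \row_(k < sdim h t.+1) updf t (rcoord a) (m 0 0) k).

Definition coord_msg (c : nat) (a b : nat -> R) : R := b c.

Definition push_upd (n : nat) (a : nat -> R) (m : R) (k : nat) : R :=
  if k == n then m else a k.

Definition readout_upd (a : nat -> R) (m : R) (k : nat) : R := (1 - a 0%N) * m.

Variables (T : nat) (h : nat -> nat).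
Variables (msgf : nat -> (nat -> R) -> (nat -> R) -> R).
Variables (updf : nat -> (nat -> R) -> R -> nat -> R).
Local Notation N := (coord_mpnn T h msgf updf).

Section States.
Variables (V : finType) (e : rel V).
Local Notation state t i j := (rcoord (mpnn_state N e t i j)).

Lemma coord_mpnn_state0 i j : state 0 i j 0 = (i == j)%:R.
Proof. exact: (rcoord_row (fun _ => _)). Qed.

Lemma coord_mpnn_stateS t i j k : (k < sdim h t.+1)%N ->
  state t.+1 i j k =
  updf t (state t i j) (\sum_(l | e j l) msgf t (state t i j) (state t i l)) k.
Proof.
move=> lt_k; rewrite /= rcoord_row // summxE; congr updf.
by apply: eq_bigr => l _; rewrite mxE.
Qed.

Lemma state_push_old t c n i j k :
  msgf t = coord_msg c -> updf t = push_upd n ->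
  (k < n)%N -> (n < sdim h t.+1)%N ->
  state t.+1 i j k = state t i j k.
Proof.
move=> msg_t upd_t lt_kn lt_n.
by rewrite coord_mpnn_stateS ?(ltn_trans lt_kn) // upd_t /push_upd ltn_eqF.
Qed.

Lemma state_push_new t c n i j :
  msgf t = coord_msg c -> updf t = push_upd n -> (n < sdim h t.+1)%N ->
  state t.+1 i j n = \sum_(l | e j l) state t i l c.
Proof.
move=> msg_t upd_t lt_n.
by rewrite coord_mpnn_stateS // msg_t upd_t /push_upd eqxx.
Qed.

Lemma state_readout t msg i j :
  msgf t = msg -> updf t = readout_upd -> (0 < sdim h t.+1)%N ->
  state t.+1 i j 0 =
  (1 - state t i j 0) * \sum_(l | e j l) msg (state t i j) (state t i l).
Proof. by move=> msg_t upd_t lt_0; rewrite coord_mpnn_stateS // msg_t upd_t. Qed.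

Lemma sum_adj_indicator i j : \sum_(k | e j k) ((i == k)%:R : R) = (e j i)%:R.
Proof.
rewrite big_mkcond (bigD1 i) //= eqxx big1 ?addr0; first by case: (e j i).
by move=> k /negbTE; rewrite eq_sym => ->; case: (e j k).
Qed.

Hypotheses (msg0 : msgf 0 = coord_msg 0) (upd0 : updf 0 = push_upd 1).
Hypothesis h0 : (1 < h 0)%N.

Lemma state1_root i j : state 1 i j 0 = (i == j)%:R.
Proof. by rewrite (state_push_old _ _ msg0 upd0) ?coord_mpnn_state0. Qed.

Lemma state1_adj i j : state 1 i j 1 = (e j i)%:R.
Proof.
rewrite (state_push_new _ _ msg0 upd0) // -sum_adj_indicator.
by apply: eq_bigr => l _; rewrite coord_mpnn_state0.
Qed.
End States.

Lemma counts_Lpaths_coord L : sdim h T = 1%N ->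
  (forall (V : finType) (e : rel V), simple_graph e -> forall i j,
     rcoord (mpnn_state N e T i j) 0 = (num_Lpaths e L i j)%:R) ->
  counts_Lpaths N L.
Proof.
move=> dimT count; split=> // V e e_simple i j.
move: (mpnn_state N e T i j) (count V e e_simple i j) => /=.
by rewrite dimT => v <- x; exact: rcoord_scalar.
Qed.
End CoordinateMPNN.

Section PathCountingMPNNs.
Variable R : realType.

Definition two_path_mpnn : mpnn R :=
  coord_mpnn 2 (fun t => if t is 0 then 2 else 1)%N
    (fun t => if t is 0 then coord_msg 0 else coord_msg 1)
    (fun t => if t is 0 then push_upd 1 else @readout_upd R).

Definition three_path_msg (a b : nat -> R) : R := (1 - b 0%N) * (b 2%N - a 1%N).

Definition three_path_mpnn : mpnn R :=
  coord_mpnn 3 (fun t => match t with 0 => 2 | 1 => 3 | _ => 1 end)%N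
    (fun t => match t with
              0 => coord_msg 0 | 1 => coord_msg 1 | _ => three_path_msg end)
    (fun t => match t with
              0 => push_upd 1 | 1 => push_upd 2 | _ => @readout_upd R end).

Lemma two_path_mpnn_counts : counts_Lpaths two_path_mpnn 2.
Proof.
apply: counts_Lpaths_coord => // V e [e_sym e_irr] i j.
rewrite (state_readout _ _ (msg := coord_msg 1)) // state1_root //.
under eq_bigr => l _ do rewrite /coord_msg state1_adj //.
have [<- | ij] := eqVneq i j; first by rewrite num_Lpaths_diag subrr mul0r.
by rewrite subr0 mul1r num_2paths // natr_sum.
Qed.

Lemma three_path_mpnn_counts : counts_Lpaths three_path_mpnn 3.
Proof.
apply: counts_Lpaths_coord => // V e [e_sym e_irr] i j.
have root2 l : rcoord (mpnn_state three_path_mpnn e 2 i l) 0 = (i == l)%:R.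
  by rewrite (state_push_old _ _ (c := 1) (n := 2)) // state1_root.
have adj2 : rcoord (mpnn_state three_path_mpnn e 2 i j) 1 = (e j i)%:R.
  by rewrite (state_push_old _ _ (c := 1) (n := 2)) // state1_adj.
have walks2 l :
    rcoord (mpnn_state three_path_mpnn e 2 i l) 2 = (\sum_(a | e l a) e a i)%:R.
  rewrite (state_push_new _ _ (c := 1)) // natr_sum.
  by apply: eq_bigr => a _; rewrite state1_adj.
rewrite (state_readout _ _ (msg := three_path_msg)) // root2.
under eq_bigr => l _ do rewrite /three_path_msg root2 adj2 walks2.
have [<- | ij] := eqVneq i j; first by rewrite num_Lpaths_diag subrr mul0r.
rewrite subr0 mul1r num_3paths // natr_sum big_mkcondr /=; apply: eq_bigr => b jb.
have [<- | ib] := eqVneq i b; first by rewrite subrr mul0r.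
by rewrite subr0 mul1r (sum_nbrs_adj_split e_sym i jb) natrD addrC addKr.
Qed.
End PathCountingMPNNs.

Theorem lemma2 (R : realType) :
  (exists N : mpnn R, counts_Lpaths N 2) /\
  (exists N : mpnn R, counts_Lpaths N 3).
Proof.
by split; [exists (two_path_mpnn R); apply: two_path_mpnn_counts
          | exists (three_path_mpnn R); apply: three_path_mpnn_counts].
Qed.
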